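(* Consider the two-signal setting in the context. Assume $f=f_xf_y$ with $f_x,f_y$ symmetric about $0$ (cdfs $F_x,F_y$), and let $\delta,\gamma,\xi>0$ satisfy $1-\delta\ge\gamma$, $1>3\delta+2\gamma$, $$\frac{F_x(\xi)}{1-F_x(\xi)}\cdot\frac{\sup_{a\in[0,\delta]}f_y(\eta-a)}{\inf_{a\in[1-\delta,1]}f_y(\eta-a)}\le\frac{1-c}{c}\ \text{ for all }\eta\ge1-\delta-\gamma,\qquad F_x(\xi)F_y(\gamma)\ge1-\delta.$$ Let $t\in\mathbb{R}$ and let $A:\mathbb{R}\to[0,1]$ be measurable with $A(\theta)\in[1-\delta,1]$ for $\theta<t$ and $A(\theta)\in[0,\delta]$ for $\theta\ge t$. Then: (1) if $y_i\ge1-\delta-\gamma$ and $x_i\le t+\xi$, then $P[\theta<t\mid A(\cdot),(x_i,y_i)]\ge c$; (2) if $y_i\le\delta+\gamma$ and $x_i\ge t-\xi$, then $P[\theta\ge t\mid A(\cdot),(x_i,y_i)]\ge c$; (3) for every $\theta<t$, $P[y_i\ge1-\delta-\gamma\text{ and }x_i\le t+\xi\mid A(\cdot),\theta]\ge1-\delta$; (4) for every $\theta\ge t$, $P[y_i\le\delta+\gamma\text{ and }x_i>t-\xi\mid A(\cdot),\theta]\ge1-\delta$.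
   Context: Agent $i$ observes $x_i=\theta+\epsilon^x_i$ and $y_i=A(\theta)+\epsilon^y_i$, where $\epsilon^x_i,\epsilon^y_i$ are independent with densities $f_x,f_y$; $c\in(0,1)$. Agents have an (improper) uniform prior on $\theta\in\mathbb{R}$, so the posterior given $(x,y)$ and the conjectured function $A(\cdot)$ is $P[\theta\in S\mid A(\cdot),(x,y)]=\int_S f_x(x-\theta)f_y(y-A(\theta))\,d\theta\big/\int_{\mathbb{R}} f_x(x-\theta)f_y(y-A(\theta))\,d\theta$ (the limit of posteriors under uniform priors on $[t-N,t+N]$). In (3) and (4), the probability is over the errors $(\epsilon^x_i,\epsilon^y_i)$ for the given fundamental $\theta$. *)

From HB Require Import structures.
From mathcomp Require Import all_boot all_order all_algebra.
From mathcomp Require Import all_classical all_reals all_analysis.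
Set Implicit Arguments. Unset Strict Implicit. Unset Printing Implicit Defensive.
Import Order.TTheory GRing.Theory Num.Theory.
Import numFieldNormedType.Exports.
Local Open Scope classical_set_scope.
Local Open Scope ring_scope.

Section Defs.
Variable R : realType.
Local Notation leb := (@lebesgue_measure R).

Definition is_density (f : R -> R) : Prop :=
  [/\ measurable_fun setT f, (forall u, 0 <= f u) &
      (\int[leb]_u (f u)%:E = 1%:E)%E].

Definition symmetric0 (f : R -> R) : Prop := forall u, f (- u) = f u.

Definition dens_cdf (f : R -> R) (z : R) : R := Rintegral leb `]-oo, z] f.

(* unnormalized posterior mass of S given (x,y) and conjectured A,
   under the improper uniform prior *)
Definition post_mass (fx fy A : R -> R) (x y : R) (S : set R) : \bar R :=
  (\int[leb]_(th in S) (fx (x - th) * fy (y - A th))%:E)%E.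

Definition posterior (fx fy A : R -> R) (x y : R) (S : set R) : R :=
  fine (post_mass fx fy A x y S) / fine (post_mass fx fy A x y setT).

Definition posterior_welldef (fx fy A : R -> R) (x y : R) : Prop :=
  (0 < post_mass fx fy A x y setT < +oo)%E.

(* probability, over the independent errors (ex, ey) with joint density
   fx(ex) fy(ey), that (x, y) = (theta + ex, A theta + ey) lies in E *)
Definition signal_prob (fx fy A : R -> R) (theta : R) (E : R -> R -> Prop)
  : \bar R :=
  (\int[leb \x leb]_(e in [set e : R * R | E (theta + e.1)%R (A theta + e.2)%R])
     (fx e.1 * fy e.2)%:E)%E.

End Defs.

From HB Require Import structures.
From mathcomp Require Import all_boot all_order all_algebra.
From mathcomp Require Import all_classical all_reals all_analysis.
From mathcomp Require Import lra measurable_realfun.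
Import Order.TTheory GRing.Theory Num.Theory.
Import numFieldNormedType.Exports.
Local Open Scope classical_set_scope.
Local Open Scope ring_scope.

(** Write [w θ = f_x(x - θ)] for the prior weight and [g θ = f_y(y - A θ)] for
    the likelihood, and [F = F_x(ξ)].  In case (1) the weight of the wrong side
    [θ ≥ t] is at most [F], and the likelihood-ratio hypothesis bounds
    [c F g θ] by [(1 - c)(1 - F) g θ'] for every [θ] on the wrong and [θ'] on
    the right side.  Integrating this inequality against [w] in both variables
    and using [(1 - F) ∫_wrong w ≤ F ∫_right w] yields
    [c ∫_wrong w g ≤ (1 - c) ∫_right w g], i.e. a posterior of at least [c].
    Case (2) is the same argument after the symmetry [y ↦ 1 - y] of [f_y].
    In cases (3) and (4) the event contains a rectangle of the error plane of
    product probability at least [F_x(ξ) F_y(γ) ≥ 1 - δ] (by Tonelli and the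
    symmetry of [f_x], [f_y]). *)

Section reflection.
Context {R : realType}.
Local Notation leb := (@lebesgue_measure R).

Lemma measurable_fun_subl (x : R) : measurable_fun setT (fun th : R => x - th).
Proof. exact: measurable_funB. Qed.

Lemma lebesgue_measure_reflect (x : R) (A : set R) : measurable A ->
  leb ((fun th => x - th) @^-1` A) = leb A.
Proof.
move=> mA; apply/esym.
(* the measure structure of [pushforward] depends on a measurability proof *)
pose mu := @measure_function_pushforward__canonical__measure_function_Measure
  _ _ (measurableTypeR R) (measurableTypeR R) R leb _ (measurable_fun_subl x).
suff itv_eq : forall X, ocitv X -> leb X = mu X.
  exact (lebesgue_measure_unique itv_eq mA).
move=> _ [[a b] _ <-]; rewrite /mu /= /pushforward.
have -> : (fun th => x - th) @^-1` `]a, b] = `[x - b, x - a[%classic.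
  by apply/seteqP; split => z /=; rewrite !in_itv /= => /andP[? ?];
    apply/andP; split; lra.
rewrite !lebesgue_measure_itv /= !lte_fin.
have -> : (x - b < x - a) = (a < b) by apply/idP/idP; lra.
by case: ifP => // _; rewrite -EFinD; congr (_%:E); lra.
Qed.

Lemma ge0_integral_reflect (x : R) (h : R -> R) (D P : set R) :
  measurable D -> measurable_fun setT h -> (forall u, 0 <= h u) ->
  (forall th, P th <-> D (x - th)) ->
  (\int[leb]_(th in P) (h (x - th))%:E = \int[leb]_(u in D) (h u)%:E)%E.
Proof.
move=> mD mh h0 PD.
have -> : P = (fun th => x - th) @^-1` D by apply/seteqP; split => z /PD.
have mhD : measurable_fun D (fun u => (h u)%:E).
  by apply/measurable_EFinP; exact: measurable_funS mh.
have h0D : {in D, forall u, (0 <= (h u)%:E)%E} by move=> u _; rewrite lee_fin.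
have := @ge0_integral_pushforward _ _ (measurableTypeR R) (measurableTypeR R) R
  _ (measurable_fun_subl x) leb D _ mD mhD h0D.
rewrite /comp => <-.
apply: (eq_measure_integral leb); first exact: measurable_fun_subl.
by move=> ? B mB _; exact: lebesgue_measure_reflect.
Qed.

End reflection.

Section density.
Context {R : realType} {f : R -> R}.
Hypothesis df : is_density f.
Local Notation leb := (@lebesgue_measure R).

Lemma density_subset_integral (A B : set R) : measurable A -> measurable B ->
  A `<=` B -> (\int[leb]_(u in A) (f u)%:E <= \int[leb]_(u in B) (f u)%:E)%E.
Proof.
case: df => mf f0 _ mA mB AB; apply: ge0_subset_integral => //.
- by apply/measurable_EFinP; exact: measurable_funS mf.
- by move=> u _; rewrite lee_fin.
Qed.

Lemma dens_cdfE (z : R) :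
  (dens_cdf f z)%:E = (\int[leb]_(u in `]-oo, z]) (f u)%:E)%E.
Proof.
case: (df) => _ f0 f1.
have I0 : (0 <= \int[leb]_(u in `]-oo, z]) (f u)%:E)%E.
  by apply: integral_ge0 => u _; rewrite lee_fin.
rewrite /dens_cdf /Rintegral fineK // ge0_fin_numE //.
by apply: (le_lt_trans _ (ltey 1)); rewrite -f1; exact: density_subset_integral.
Qed.

Lemma dens_cdf_itv (z : R) : 0 <= dens_cdf f z <= 1.
Proof.
case: (df) => _ f0 f1; rewrite -!lee_fin dens_cdfE; apply/andP; split.
- by apply: integral_ge0 => u _; rewrite lee_fin.
- by rewrite -f1; exact: density_subset_integral.
Qed.

Lemma symmetric_dens_cdfE (z : R) : symmetric0 f ->
  (dens_cdf f z)%:E = (\int[leb]_(u in `](- z)%R, +oo[) (f u)%:E)%E.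
Proof.
case: (df) => mf f0 _ sf; rewrite dens_cdfE -integral_itv_bndo_bndc; last first.
  by apply/measurable_EFinP; exact: measurable_funS mf.
rewrite -(ge0_integral_reflect 0 f `](- z)%R, +oo[ `]-oo, z[) //; last first.
  by move=> u /=; rewrite !in_itv /= andbT; split => ?; lra.
by apply: eq_integral => u _; rewrite sub0r sf.
Qed.

End density.

(* If [F = 1] then [w1] may vanish and the cross inequality carries no
   information, hence the separate hypothesis on [m2]. *)
Lemma ratio_ge_of_cross_le {R : realFieldType} (c F w1 w2 m1 m2 : R) :
  0 < c < 1 -> 0 < F <= 1 -> 0 <= w2 <= F -> w1 + w2 = 1 ->
  0 <= m1 -> 0 <= m2 -> 0 < m1 + m2 -> (F = 1 -> m2 = 0) ->
  c * F * m2 * w1 <= (1 - c) * (1 - F) * m1 * w2 ->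
  c <= m1 / (m1 + m2).
Proof.
move=> /andP[c0 c1] /andP[F0 F1] /andP[w20 w2F] w12 m10 m20 m0 F1m2 cross.
rewrite ler_pdivlMr //.
have [/F1m2 -> | FN1] := eqVneq F 1; first by rewrite addr0; nra.
have F_lt1 : F < 1 by rewrite lt_neqAle FN1 F1.
have Fw1 : 0 < F * w1 by apply: mulr_gt0 => //; lra.
suff : F * w1 * (c * m2) <= F * w1 * ((1 - c) * m1) by rewrite ler_pM2l //; lra.
have : (1 - c) * m1 * ((1 - F) * w2) <= (1 - c) * m1 * (F * w1).
  by apply: ler_wpM2l; [nra | nra].
nra.
Qed.

Section posterior_bound.
Context {d} {T : measurableType d} {R : realType}.
Variable mu : {measure set T -> \bar R}.

Lemma ge0_integral_cross_le (S U : set T) (w p q : T -> R) :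
  measurable S -> measurable U ->
  measurable_fun setT w -> measurable_fun setT p -> measurable_fun setT q ->
  (forall u, 0 <= w u) -> (forall u, 0 <= p u) -> (forall u, 0 <= q u) ->
  (forall th th', U th -> S th' -> p th <= q th') ->
  (\int[mu]_(u in U) (w u * p u)%:E * \int[mu]_(u in S) (w u)%:E <=
   \int[mu]_(u in S) (w u * q u)%:E * \int[mu]_(u in U) (w u)%:E)%E.
Proof.
move=> mS mU mw mp mq w0 p0 q0 pq.
have mE (D : set T) (h : T -> R) : measurable_fun setT h ->
    measurable_fun D (fun u => (h u)%:E).
  by move=> mh; apply/measurable_EFinP; exact: measurable_funS mh.
set W := (\int[mu]_(u in S) (w u)%:E)%E.
set Q := (\int[mu]_(u in S) (w u * q u)%:E)%E.
have W0 : (0 <= W)%E by apply: integral_ge0 => u _; rewrite lee_fin.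
have pW_le th : U th -> ((p th)%:E * W <= Q)%E.
  move=> Uth; rewrite -ge0_integralZl_EFin //; last 2 first.
  - by move=> u _; rewrite lee_fin.
  - exact: mE.
  apply: ge0_le_integral => //.
  - by move=> u _; rewrite -EFinM lee_fin mulr_ge0.
  - by apply: measurable_funeM; exact: mE.
  - by apply: mE; exact: measurable_funM.
  - by move=> u Su; rewrite -EFinM lee_fin mulrC ler_wpM2l // pq.
rewrite -(ge0_integralZr mu mU (mE _ _ (measurable_funM mw mp))) //; last first.
  by move=> u _; rewrite lee_fin mulr_ge0.
rewrite -(ge0_integralZl mu mU) //; last 3 first.
- exact: mE.
- by move=> u _; rewrite lee_fin.
- by apply: integral_ge0 => u _; rewrite lee_fin mulr_ge0.
apply: ge0_le_integral => //.
- by move=> u _; rewrite mule_ge0 // lee_fin mulr_ge0.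
- exact: emeasurable_funM (mE _ _ (measurable_funM mw mp)) (measurable_cst _).
- exact: measurable_funeM (mE _ _ mw).
- move=> u Uu /=; rewrite EFinM -muleA muleC lee_wpmul2r ?lee_fin //.
  exact: pW_le.
Qed.

Lemma ge0_integral_setC (S : set T) (h : T -> R) : measurable S ->
  measurable_fun setT h -> (forall u, 0 <= h u) ->
  (\int[mu]_u (h u)%:E =
   \int[mu]_(u in S) (h u)%:E + \int[mu]_(u in ~` S) (h u)%:E)%E.
Proof.
move=> mS mh h0; rewrite -ge0_integral_setU ?setUCr //.
- exact: measurableC.
- exact/measurable_EFinP.
- by move=> u _; rewrite lee_fin.
- by apply/disj_setPCl.
Qed.

Lemma ge0_integral_cross_scaled_le (S U : set T) (w g : T -> R) (a b : R) :
  measurable S -> measurable U -> measurable_fun setT w -> measurable_fun setT g ->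
  (forall u, 0 <= w u) -> (forall u, 0 <= g u) -> 0 <= a -> 0 <= b ->
  (forall th th', U th -> S th' -> a * g th <= b * g th') ->
  (a%:E * \int[mu]_(u in U) (w u * g u)%:E * \int[mu]_(u in S) (w u)%:E <=
   b%:E * \int[mu]_(u in S) (w u * g u)%:E * \int[mu]_(u in U) (w u)%:E)%E.
Proof.
move=> mS mU mw mg w0 g0 a0 b0 cross.
have mwg := measurable_funM mw mg.
have intZ (D : set T) (k : R) : measurable D -> 0 <= k ->
    (\int[mu]_(u in D) (w u * (k * g u))%:E =
     k%:E * \int[mu]_(u in D) (w u * g u)%:E)%E.
  move=> mD k0; under eq_integral do rewrite mulrCA EFinM.
  rewrite ge0_integralZl_EFin //.
  - by move=> u _; rewrite lee_fin mulr_ge0.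
  - by apply/measurable_EFinP; exact: measurable_funS mwg.
rewrite -!intZ //.
apply: ge0_integral_cross_le => //.
- exact: measurable_funM.
- exact: measurable_funM.
- by move=> u; rewrite mulr_ge0.
- by move=> u; rewrite mulr_ge0.
Qed.

Lemma posterior_ratio_ge (c F : R) (w g : T -> R) (S : set T) :
  0 < c < 1 -> 0 < F <= 1 -> measurable S -> S !=set0 ->
  measurable_fun setT w -> measurable_fun setT g ->
  (forall u, 0 <= w u) -> (forall u, 0 <= g u) ->
  (\int[mu]_u (w u)%:E = 1)%E ->
  (\int[mu]_(u in ~` S) (w u)%:E <= F%:E)%E ->
  (forall th th', (~` S) th -> S th' -> c * F * g th <= (1 - c) * (1 - F) * g th') ->
  (0 < \int[mu]_u (w u * g u)%:E < +oo)%E ->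
  c <= fine (\int[mu]_(u in S) (w u * g u)%:E) / fine (\int[mu]_u (w u * g u)%:E).
Proof.
move=> /[dup] /andP[c_gt0 _] c01 F01 mS [th0 Sth0] mw mg w0 g0 w1 wSC cross.
have wg0 u : 0 <= w u * g u by rewrite mulr_ge0.
have ge0_int (D : set T) (h : T -> R) : (forall u, 0 <= h u) ->
    (0 <= \int[mu]_(u in D) (h u)%:E)%E.
  by move=> h0; apply: integral_ge0 => u _; rewrite lee_fin.
have cF_ge0 : 0 <= c * F by apply: mulr_ge0; lra.
have cF'_ge0 : 0 <= (1 - c) * (1 - F) by apply: mulr_ge0; lra.
have := ge0_integral_cross_scaled_le S (~` S) w g (c * F) ((1 - c) * (1 - F))
  mS (measurableC mS) mw mg w0 g0 cF_ge0 cF'_ge0 cross.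
rewrite (ge0_integral_setC S w mS mw w0) in w1.
rewrite (ge0_integral_setC S (fun u => w u * g u) mS (measurable_funM mw mg) wg0).
set W1 := (\int[mu]_(u in S) (w u)%:E)%E.
set W2 := (\int[mu]_(u in ~` S) (w u)%:E)%E.
set M1 := (\int[mu]_(u in S) (w u * g u)%:E)%E.
set M2 := (\int[mu]_(u in ~` S) (w u * g u)%:E)%E.
rewrite -/W1 -/W2 in w1 wSC => cross_int /andP[M0 Mfin].
have /andP[W1fin W2fin] : (W1 \is a fin_num) && (W2 \is a fin_num).
  by rewrite -fin_numD w1.
have /andP[M1fin M2fin] : (M1 \is a fin_num) && (M2 \is a fin_num).
  by rewrite -fin_numD ge0_fin_numE // ltW.
have M2_F1 : F = 1 -> fine M2 = 0.
  move=> F1; rewrite /M2 integral0_eq // => th Sth.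
  have := cross th th0 Sth Sth0; rewrite F1 subrr !mulr0 mul0r mulr1 => cg.
  have -> : g th = 0 by apply/eqP; rewrite eq_le g0 andbT -(pmulr_rle0 _ c_gt0).
  by rewrite mulr0.
rewrite -(fineK W1fin) -(fineK W2fin) in w1 wSC cross_int.
rewrite -(fineK M1fin) -(fineK M2fin) in M0 cross_int *.
rewrite -!EFinM lee_fin in cross_int; rewrite -EFinD lte_fin in M0.
move: w1; rewrite -EFinD => /eqP; rewrite eqe => /eqP w1.
apply: (ratio_ge_of_cross_le c F (fine W1) (fine W2)) => //=.
- by rewrite fine_ge0 ?ge0_int // -lee_fin.
- exact/fine_ge0/ge0_int.
- exact/fine_ge0/ge0_int.
Qed.

End posterior_bound.

Section product_rectangle.
Context {d1 d2} {T1 : measurableType d1} {T2 : measurableType d2} {R : realType}.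
Variables (m1 : {sigma_finite_measure set T1 -> \bar R})
  (m2 : {sigma_finite_measure set T2 -> \bar R}).

Lemma ge0_integral_rect (X : set T1) (Y : set T2) (f : T1 -> R) (g : T2 -> R) :
  measurable X -> measurable Y ->
  measurable_fun setT f -> measurable_fun setT g ->
  (forall u, 0 <= f u) -> (forall v, 0 <= g v) ->
  (\int[m1 \x m2]_(e in X `*` Y) (f e.1 * g e.2)%:E =
   \int[m1]_(u in X) (f u)%:E * \int[m2]_(v in Y) (g v)%:E)%E.
Proof.
move=> mX mY mf mg f0 g0.
pose fX u := \1_X u * f u; pose gY v := \1_Y v * g v.
have fX0 u : 0 <= fX u by rewrite mulr_ge0.
have gY0 v : 0 <= gY v by rewrite mulr_ge0.
have mfX : measurable_fun setT fX by apply: measurable_funM => //; exact: measurable_indic.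
have mgY : measurable_fun setT gY by apply: measurable_funM => //; exact: measurable_indic.
have EX : (\int[m1]_(u in X) (f u)%:E = \int[m1]_u (fX u)%:E)%E.
  rewrite integral_mkcond; apply: eq_integral => u _.
  by rewrite /patch /fX indicE; case: (u \in X); rewrite ?mul1r ?mul0r.
have EY : (\int[m2]_(v in Y) (g v)%:E = \int[m2]_v (gY v)%:E)%E.
  rewrite integral_mkcond; apply: eq_integral => v _.
  by rewrite /patch /gY indicE; case: (v \in Y); rewrite ?mul1r ?mul0r.
rewrite EX EY integral_mkcond.
transitivity (\int[m1 \x m2]_e (fX e.1 * gY e.2)%:E)%E.
  apply: eq_integral => -[u v] _; rewrite /patch /fX /gY !indicE in_setX /=.
  by case: (u \in X); case: (v \in Y); rewrite ?mul1r ?mul0r ?mulr0.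
rewrite fubini_tonelli1 /=; last 2 first.
- apply/measurable_EFinP; apply: measurable_funM.
  + exact: measurableT_comp mfX measurable_fst.
  + exact: measurableT_comp mgY measurable_snd.
- by move=> e; rewrite lee_fin mulr_ge0.
rewrite /fubini_F /=.
under eq_integral => u _.
  under eq_integral => v _ do rewrite EFinM.
  rewrite ge0_integralZl_EFin //; last first.
  - exact/measurable_EFinP.
  - by move=> v _; rewrite lee_fin.
  over.
rewrite ge0_integralZr //.
- exact/measurable_EFinP.
- by move=> u _; rewrite lee_fin.
- by apply: integral_ge0 => v _; rewrite lee_fin.
Qed.

End product_rectangle.

Lemma setC_ltr {R : realType} (t : R) : ~` [set th : R | th < t] = [set th | t <= th].
Proof. by rewrite -set_itvNyo setCitvl set_itvcy. Qed.

Lemma setC_ler {R : realType} (t : R) : ~` [set th : R | t <= th] = [set th | th < t].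
Proof. by rewrite -setC_ltr setCK. Qed.

Section two_signals.
Context {R : realType}.
Variables (c : R) (fx fy A : R -> R) (delta gamma xi t : R).
Hypotheses (c01 : 0 < c < 1) (dfx : is_density fx) (dfy : is_density fy).
Hypotheses (sfx : symmetric0 fx) (sfy : symmetric0 fy).
Hypothesis delta_lt1 : delta < 1.
Hypothesis likelihood_ratio : forall eta, 1 - delta - gamma <= eta ->
  forall a b, 0 <= a <= delta -> 1 - delta <= b <= 1 ->
  c * dens_cdf fx xi * fy (eta - a) <= (1 - c) * (1 - dens_cdf fx xi) * fy (eta - b).
Hypothesis cdf_prod_ge : 1 - delta <= dens_cdf fx xi * dens_cdf fy gamma.
Hypothesis mA : measurable_fun setT A.
Hypothesis A_below : forall th, th < t -> 1 - delta <= A th <= 1.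
Hypothesis A_above : forall th, t <= th -> 0 <= A th <= delta.
Local Notation leb := (@lebesgue_measure R).
Local Notation Fx := (dens_cdf fx xi).

Let Fx01 : 0 < Fx <= 1.
Proof.
have /andP[Fx0 ->] := dens_cdf_itv dfx xi; have /andP[Fy0 _] := dens_cdf_itv dfy gamma.
rewrite andbT lt_neqAle Fx0 andbT; apply/eqP => Fx_eq0.
by move: cdf_prod_ge; rewrite -Fx_eq0 mul0r subr_le0 leNgt delta_lt1.
Qed.

Let mfx : measurable_fun setT fx. Proof. by case: dfx. Qed.
Let fx0 u : 0 <= fx u. Proof. by case: dfx. Qed.

Let measurable_weight x : measurable_fun setT (fun th : R => fx (x - th)).
Proof. exact: measurableT_comp mfx (measurable_fun_subl x). Qed.

Let measurable_likelihood y : measurable_fun setT (fun th : R => fy (y - A th)).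
Proof. by case: dfy => mfy _ _; apply: measurableT_comp mfy _; exact: measurable_funB. Qed.

Let weight_total x : (\int[leb]_th (fx (x - th))%:E = 1)%E.
Proof.
case: dfx => _ _ <-; exact: ge0_integral_reflect.
Qed.

Lemma posterior_below_ge x y : 1 - delta - gamma <= y -> x <= t + xi ->
  posterior_welldef fx fy A x y -> c <= posterior fx fy A x y [set th | th < t].
Proof.
move=> hy hx; rewrite /posterior /post_mass.
apply: (@posterior_ratio_ge _ (measurableTypeR R) _ leb c Fx) => //.
- by rewrite -set_itvNyo; exact: measurable_itv.
- by exists (t - 1); rewrite /=; lra.
- exact: measurable_weight.
- exact: measurable_likelihood.
- by move=> u; case: dfy.
- rewrite setC_ltr (ge0_integral_reflect x fx `]-oo, x - t]) //; last first.
    by move=> th /=; rewrite in_itv /=; split => ?; lra.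
  rewrite dens_cdfE //; apply: density_subset_integral => //.
  by move=> u /=; rewrite !in_itv /= => ?; lra.
- rewrite setC_ltr => th th' /A_above Ath /A_below Ath'.
  exact: likelihood_ratio.
Qed.

Lemma posterior_above_ge x y : y <= delta + gamma -> t - xi <= x ->
  posterior_welldef fx fy A x y -> c <= posterior fx fy A x y [set th | t <= th].
Proof.
move=> hy hx; rewrite /posterior /post_mass.
apply: (@posterior_ratio_ge _ (measurableTypeR R) _ leb c Fx) => //.
- by rewrite -set_itvcy; exact: measurable_itv.
- by exists t => /=.
- exact: measurable_weight.
- exact: measurable_likelihood.
- by move=> u; case: dfy.
- rewrite setC_ler (ge0_integral_reflect x fx `](x - t)%R, +oo[) //; last first.
    by move=> th /=; rewrite in_itv /= andbT; split => ?; lra.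
  rewrite symmetric_dens_cdfE //; apply: density_subset_integral => //.
  by move=> u /=; rewrite !in_itv /= !andbT => ?; lra.
- rewrite setC_ler => th th' /A_below /andP[? ?] /A_above /andP[? ?].
  have fy_flip z : fy (y - z) = fy ((1 - y) - (1 - z)).
    by rewrite -sfy; congr fy; lra.
  rewrite !fy_flip; apply: likelihood_ratio; [lra | apply/andP; split; lra..].
Qed.

Lemma signal_prob_rect th (E : R -> R -> Prop) (X Y : set R) :
  measurable X -> measurable Y ->
  (forall a b, E (th + a) (A th + b) <-> X a /\ Y b) ->
  signal_prob fx fy A th E =
  (\int[leb]_(u in X) (fx u)%:E * \int[leb]_(v in Y) (fy v)%:E)%E.
Proof.
move=> mX mY EXY; rewrite /signal_prob.
have -> : [set e : R * R | E (th + e.1) (A th + e.2)] = X `*` Y.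
  by apply/seteqP; split => -[a b] /= /EXY.
by case: dfy => mfy fy0 _; apply: ge0_integral_rect.
Qed.

Lemma signal_prob_below_ge th : th < t ->
  ((1 - delta)%:E <= signal_prob fx fy A th
     (fun x y => (1 - delta - gamma <= y)%R /\ (x <= t + xi)%R))%E.
Proof.
move=> /[dup] tht /A_below /andP[Ath _].
rewrite (signal_prob_rect th _ `]-oo, t + xi - th] `[1 - delta - gamma - A th, +oo[) //;
  last by move=> a b /=; rewrite !in_itv /= andbT; split => -[? ?]; split; lra.
have /andP[Fx0 _] := dens_cdf_itv dfx xi; have /andP[Fy0 _] := dens_cdf_itv dfy gamma.
apply: (@le_trans _ _ (Fx%:E * (dens_cdf fy gamma)%:E)%E); first by rewrite -EFinM lee_fin.
apply: lee_pmul; rewrite ?lee_fin //.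
- rewrite dens_cdfE //; apply: density_subset_integral => // u /=.
  by rewrite !in_itv /= => ?; lra.
- rewrite symmetric_dens_cdfE //; apply: density_subset_integral => // u /=.
  by rewrite !in_itv /= !andbT => ?; lra.
Qed.

Lemma signal_prob_above_ge th : t <= th ->
  ((1 - delta)%:E <= signal_prob fx fy A th
     (fun x y => (y <= delta + gamma)%R /\ (t - xi < x)%R))%E.
Proof.
move=> /[dup] tth /A_above /andP[_ Ath].
rewrite (signal_prob_rect th _ `](t - xi - th)%R, +oo[ `]-oo, delta + gamma - A th]) //;
  last by move=> a b /=; rewrite !in_itv /= andbT; split => -[? ?]; split; lra.
have /andP[Fx0 _] := dens_cdf_itv dfx xi; have /andP[Fy0 _] := dens_cdf_itv dfy gamma.
apply: (@le_trans _ _ (Fx%:E * (dens_cdf fy gamma)%:E)%E); first by rewrite -EFinM lee_fin.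
apply: lee_pmul; rewrite ?lee_fin //.
- rewrite symmetric_dens_cdfE //; apply: density_subset_integral => // u /=.
  by rewrite !in_itv /= !andbT => ?; lra.
- rewrite dens_cdfE //; apply: density_subset_integral => // u /=.
  by rewrite !in_itv /= => ?; lra.
Qed.

End two_signals.

Theorem lemma2 (R : realType) (c : R) (fx fy : R -> R)
  (delta gamma xi t : R) (A : R -> R) :
  0 < c < 1 ->
  is_density fx -> is_density fy ->
  symmetric0 fx -> symmetric0 fy ->
  0 < delta -> 0 < gamma -> 0 < xi ->
  gamma <= 1 - delta ->
  3 * delta + 2 * gamma < 1 ->
  (forall eta : R, 1 - delta - gamma <= eta ->
     forall a b : R, 0 <= a <= delta -> 1 - delta <= b <= 1 ->
       c * dens_cdf fx xi * fy (eta - a) <= (1 - c) * (1 - dens_cdf fx xi) * fy (eta - b)) ->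
  dens_cdf fx xi * dens_cdf fy gamma >= 1 - delta ->
  measurable_fun setT A ->
  (forall th, 0 <= A th <= 1) ->
  (forall th, th < t -> 1 - delta <= A th <= 1) ->
  (forall th, t <= th -> 0 <= A th <= delta) ->
  [/\ (forall x y : R, 1 - delta - gamma <= y -> x <= t + xi ->
         posterior_welldef fx fy A x y ->
         posterior fx fy A x y [set th | th < t] >= c),
      (forall x y : R, y <= delta + gamma -> t - xi <= x ->
         posterior_welldef fx fy A x y ->
         posterior fx fy A x y [set th | t <= th] >= c),
      (forall theta : R, theta < t ->
         (signal_prob fx fy A theta
            (fun x y => (1 - delta - gamma <= y)%R /\ (x <= t + xi)%R)
          >= (1 - delta)%:E)%E) &
      (forall theta : R, t <= theta ->
         (signal_prob fx fy A theta
            (fun x y => (y <= delta + gamma)%R /\ (t - xi < x)%R)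
          >= (1 - delta)%:E)%E)].
Proof.
move=> c01 dfx dfy sfx sfy _ gamma_gt0 _ _ delta_gamma_lt1 likelihood_ratio
  cdf_prod_ge mA _ A_below A_above.
have delta_lt1 : delta < 1 by lra.
split.
- by move=> x y; apply: posterior_below_ge.
- by move=> x y; apply: posterior_above_ge.
- by move=> th; apply: signal_prob_below_ge.
- by move=> th; apply: signal_prob_above_ge.
Qed.
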